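(* Let $G$ be a graph that has a barbell partition. Then there is a matrix $M\in\mathcal{S}(G)$ that does not have the strong Arnold property (and hence does not have the strong spectral property).
   Context: All graphs are finite, simple, undirected. For a graph $G$ with vertex set $\{1,\ldots,n\}$, $\mathcal{S}(G)$ is the set of all real symmetric $n\times n$ matrices $A=(a_{ij})$ such that for $i\neq j$, $a_{ij}\neq 0$ iff $\{i,j\}\in E(G)$ (diagonal arbitrary). A real symmetric matrix $A$ has the strong Arnold property (SAP) if the only real symmetric $X$ with $A\circ X=0$, $I\circ X=0$ and $AX=0$ is $X=0$; it has the strong spectral property (SSP) if the only real symmetric $X$ with $A\circ X=0$, $I\circ X=0$ and $AX-XA=0$ is $X=0$ ($\circ$ is the entrywise product). A barbell partition of $G$ is a partition of $V(G)$ into three disjoint sets $R,W_1,W_2$ such that: $R$ may be empty but $W_1\neq\emptyset$ and $W_2\neq\emptyset$; there are no edges between $W_1$ and $W_2$; and for every $v\in R$ and $i=1,2$, $|N_G(v)\cap W_i|\neq 1$, where $N_G(v)$ is the set of neighbours of $v$. *)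

From HB Require Import structures.
From mathcomp Require Import all_boot all_order all_algebra.
From mathcomp Require Import reals.
Set Implicit Arguments. Unset Strict Implicit. Unset Printing Implicit Defensive.
Import Order.TTheory GRing.Theory Num.Theory.
Local Open Scope ring_scope.

Definition simple_graph (n : nat) (e : rel 'I_n) : Prop :=
  symmetric e /\ irreflexive e.

Definition nbhd (n : nat) (e : rel 'I_n) (v : 'I_n) : {set 'I_n} :=
  [set u | e v u].

Definition in_SG (R : realType) (n : nat) (e : rel 'I_n) (A : 'M[R]_n) : Prop :=
  A^T = A /\ forall i j : 'I_n, i != j -> (A i j != 0) = e i j.

Definition hadamard (R : realType) (n : nat) (A B : 'M[R]_n) : 'M[R]_n :=
  \matrix_(i, j) (A i j * B i j).

Definition SAP (R : realType) (n : nat) (A : 'M[R]_n) : Prop :=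
  forall X : 'M[R]_n, X^T = X -> hadamard A X = 0 -> hadamard 1%:M X = 0 ->
    A *m X = 0 -> X = 0.

Definition SSP (R : realType) (n : nat) (A : 'M[R]_n) : Prop :=
  forall X : 'M[R]_n, X^T = X -> hadamard A X = 0 -> hadamard 1%:M X = 0 ->
    A *m X - X *m A = 0 -> X = 0.

Definition barbell_partition (n : nat) (e : rel 'I_n) (R0 W1 W2 : {set 'I_n}) : Prop :=
  [/\ [disjoint R0 & W1], [disjoint R0 & W2] & [disjoint W1 & W2]] /\
  R0 :|: W1 :|: W2 = [set: 'I_n] /\
  W1 != set0 /\ W2 != set0 /\
  (forall u v, u \in W1 -> v \in W2 -> ~~ e u v) /\
  (forall v, v \in R0 -> #|nbhd e v :&: W1| != 1%N /\ #|nbhd e v :&: W2| != 1%N).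

Definition has_barbell_partition (n : nat) (e : rel 'I_n) : Prop :=
  exists R0 W1 W2 : {set 'I_n}, barbell_partition e R0 W1 W2.

From HB Require Import structures.
From mathcomp Require Import all_boot all_order all_algebra.
From mathcomp Require Import reals.
Set Implicit Arguments. Unset Strict Implicit. Unset Printing Implicit Defensive.
Import Order.TTheory GRing.Theory Num.Theory.
Local Open Scope ring_scope.

(* If no vertex outside W has exactly one neighbour in W, the edges at W can be
   weighted so that the indicator vector 1_W is in the kernel: inside W use the
   Laplacian sign pattern, and let a vertex outside W with k <> 1 neighbours in
   W give weight 1 - k to one of them and 1 to the others.  Doing this for both
   halves W1, W2 of a barbell partition, and putting 1 on the edges inside R,
   yields M in S(G) with M 1_W1 = M 1_W2 = 0.  As W1 and W2 are disjoint and
   nonadjacent, X = 1_W1 1_W2^T + 1_W2 1_W1^T is a nonzero symmetric matrix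
   vanishing on the diagonal and on the edges with M X = 0, so M fails SAP;
   for symmetric matrices SSP implies SAP. *)

Definition zero_sum_weight (R : pzRingType) (T : finType) (S : {set T}) (u : T) : R :=
  if [pick v in S] == Some u then 1 - #|S|%:R else 1.

Lemma sum_zero_sum_weight (R : pzRingType) (T : finType) (S : {set T}) :
  \sum_(u in S) zero_sum_weight R S u = 0.
Proof.
rewrite /zero_sum_weight; case: pickP => [p Sp|S0]; last by rewrite big_pred0.
rewrite (bigD1 p) //= eqxx (eq_bigr (fun=> 1)) => [|u /andP[_ u_p]]; last first.
  by rewrite (inj_eq Some_inj) eq_sym (negbTE u_p).
rewrite sumr_const (cardsD1 p S) Sp add1n.
have -> : #|[pred u in S | u != p]| = #|S :\ p|.
  by apply: eq_card => u; rewrite !inE andbC.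
by rewrite -natr1 [_ + 1]addrC opprD addrA subrr sub0r addNr.
Qed.

Lemma zero_sum_weight_neq0 (R : numDomainType) (T : finType) (S : {set T}) (u : T) :
  #|S| != 1%N -> zero_sum_weight R S u != 0.
Proof.
move=> S_ne1; rewrite /zero_sum_weight; case: ifP => _; last exact: oner_neq0.
by rewrite subr_eq0 eq_sym pnatr_eq1.
Qed.

Lemma SSP_SAP (R : realType) (n : nat) (A : 'M[R]_n) : A^T = A -> SSP A -> SAP A.
Proof.
move=> A_tr ssp X X_tr AX IX AX0; apply: ssp => //.
by rewrite -[X *m A]trmxK trmx_mul A_tr X_tr AX0 trmx0 subrr.
Qed.

Lemma not_SAP_of_kernel_pair (R : realType) (n : nat) (A : 'M[R]_n) (x y : 'cV[R]_n) :
  A^T = A -> A *m x = 0 -> A *m y = 0 -> x != 0 -> y != 0 ->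
  (forall i j, x i 0 != 0 -> y j 0 != 0 -> i != j /\ A i j = 0) -> ~ SAP A.
Proof.
move=> A_tr Ax Ay x_neq0 y_neq0 xy_apart sap.
pose X := x *m y^T + y *m x^T.
have Xij i j : X i j = x i 0 * y j 0 + y i 0 * x j 0.
  by rewrite !mxE !big_ord1 !mxE.
have x_y_apart i j : x i 0 * y j 0 != 0 -> i != j /\ A i j = 0.
  by rewrite mulf_eq0 negb_or => /andP[]; apply: xy_apart.
have y_x_apart i j : y i 0 * x j 0 != 0 -> i != j /\ A i j = 0.
  rewrite mulrC => /x_y_apart[ji Aji]; split; first by rewrite eq_sym.
  by rewrite -A_tr mxE.
have xy0 i : x i 0 * y i 0 = 0.
  by apply/eqP; apply: contraT => /x_y_apart[]; rewrite eqxx.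
case/matrix0Pn: x_neq0 => a [k xa]; rewrite ord1 in xa.
case/matrix0Pn: y_neq0 => b [l yb]; rewrite ord1 in yb.
have /matrixP/(_ a b) : X = 0.
  apply: sap.
  - by rewrite linearD /= !trmx_mul !trmxK addrC.
  - apply/matrixP => i j; rewrite /hadamard mxE Xij mxE.
    have [/x_y_apart[_ ->]|/negbNE/eqP->] := boolP (x i 0 * y j 0 != 0).
      by rewrite mul0r.
    have [/y_x_apart[_ ->]|/negbNE/eqP->] := boolP (y i 0 * x j 0 != 0).
      by rewrite mul0r.
    by rewrite addr0 mulr0.
  - apply/matrixP => i j; rewrite /hadamard mxE Xij !mxE.
    case: eqVneq => [->|]; rewrite ?mulr0n ?mul0r //.
    by rewrite [y _ _ * _]mulrC xy0 addr0 mulr0.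
  - by rewrite mulmxDr !mulmxA Ax Ay !mul0mx addr0.
have ya : y a 0 = 0 by apply/eqP; move/eqP: (xy0 a); rewrite mulf_eq0 (negbTE xa).
by rewrite Xij ya mul0r addr0 mxE => /eqP; apply/negP; rewrite mulf_neq0.
Qed.

Section BarbellPartition.

Variables (n : nat) (e : rel 'I_n).
Hypothesis e_sym : symmetric e.
Implicit Types (W : {set 'I_n}) (k v : 'I_n).

Definition lone_neighbour_free W :=
  forall v, v \notin W -> #|nbhd e v :&: W| != 1%N.

Lemma barbell_partitionC (R0 : {set 'I_n}) W1 W2 :
  barbell_partition e R0 W1 W2 -> barbell_partition e R0 W2 W1.
Proof.
move=> [[d01 d02 d12] [cover [W1_n0 [W2_n0 [apart lone]]]]].
split; first by split=> //; rewrite disjoint_sym.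
split; first by rewrite setUAC.
do 2!split=> //; split; first by move=> u v uW2 vW1; rewrite e_sym apart.
by move=> v /lone[].
Qed.

Lemma barbell_partition_cover (R0 : {set 'I_n}) W1 W2 k :
  barbell_partition e R0 W1 W2 -> k \notin W1 -> k \notin W2 -> k \in R0.
Proof.
move=> [_ [cover _]] /negbTE kW1 /negbTE kW2.
by have := in_setT k; rewrite -cover !inE kW1 kW2 !orbF.
Qed.

Lemma barbell_lone_neighbour_free (R0 : {set 'I_n}) W1 W2 :
  barbell_partition e R0 W1 W2 -> lone_neighbour_free W1.
Proof.
move=> bp v vW1; have [vW2|vW2] := boolP (v \in W2); last first.
  case: (bp) => [_ [_ [_ [_ [_ lone]]]]].
  by case: (lone v (barbell_partition_cover bp vW1 vW2)).
suff -> : nbhd e v :&: W1 = set0 by rewrite cards0.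
case: bp => [_ [_ [_ [_ [apart _]]]]].
apply/setP => u; rewrite !inE; have [uW1|] := boolP (u \in W1); last by rewrite andbF.
by rewrite andbT e_sym (negbTE (apart _ _ uW1 vW2)).
Qed.

End BarbellPartition.

Section BarbellMatrix.

Variables (R : numDomainType) (n : nat) (e : rel 'I_n).
Hypotheses (e_sym : symmetric e) (e_irr : irreflexive e).
Implicit Types (W S : {set 'I_n}) (i j k : 'I_n).

Definition indicator W : 'cV[R]_n := \col_j (j \in W)%:R.

Lemma indicator_neq0E W i : (indicator W i 0 != 0) = (i \in W).
Proof. by rewrite mxE pnatr_eq0 eqb0 negbK. Qed.

Lemma indicator_neq0 W : W != set0 -> indicator W != 0.
Proof.
by case/set0Pn=> w wW; apply/matrix0Pn; exists w, 0; rewrite indicator_neq0E.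
Qed.

Lemma mulmx_indicator m (A : 'M[R]_(m, n)) W (i : 'I_m) (k : 'I_1) :
  (A *m indicator W) i k = \sum_(j in W) A i j.
Proof.
rewrite mxE [RHS]big_mkcond; apply: eq_bigr => j _.
by rewrite mxE; case: (j \in W); rewrite ?mulr1 ?mulr0.
Qed.

Definition barbell_block W : 'M[R]_n :=
  \matrix_(i, j)
    if i == j then (if i \in W then - #|nbhd e i :&: W|%:R else 0)
    else if e i j then
      if i \in W then (if j \in W then 1 else zero_sum_weight R (nbhd e j :&: W) i)
      else if j \in W then zero_sum_weight R (nbhd e i :&: W) j else 0
    else 0.

Lemma barbell_block_tr W : (barbell_block W)^T = barbell_block W.
Proof.
apply/matrixP => i j; rewrite !mxE eq_sym e_sym.
by case: eqVneq => [->|_] //; case: (i \in W); case: (j \in W).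
Qed.

Lemma barbell_block_out W i j : i \notin W -> j \notin W -> barbell_block W i j = 0.
Proof. by move=> /negbTE iW /negbTE jW; rewrite mxE iW jW /= !if_same. Qed.

Lemma barbell_block_nonedge W i j : i != j -> ~~ e i j -> barbell_block W i j = 0.
Proof. by move=> /negbTE ij /negbTE eij; rewrite mxE ij eij. Qed.

Lemma barbell_block_edge_neq0 W i j : lone_neighbour_free e W ->
  i != j -> e i j -> i \in W -> barbell_block W i j != 0.
Proof.
move=> lone /negbTE ij eij iW; rewrite mxE ij eij iW.
by case: ifPn => [_|/lone]; [exact: oner_neq0 | exact: zero_sum_weight_neq0].
Qed.

Lemma mul_barbell_block_indicator W : barbell_block W *m indicator W = 0.
Proof.
apply/matrixP => i k; rewrite mulmx_indicator mxE.
have [iW|iW] := boolP (i \in W).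
  rewrite (bigD1 i) //= mxE eqxx iW.
  rewrite (eq_bigr (fun j => if e i j then 1 else 0)) => [|j /andP[jW ji]]; last first.
    by rewrite mxE eq_sym (negbTE ji) iW jW.
  rewrite -big_mkcondr sumr_const.
  have -> : #|[pred j | (j \in W) && (j != i) && e i j]| = #|nbhd e i :&: W|.
    apply: eq_card => j; rewrite !inE.
    by case: eqVneq => [->|]; rewrite ?e_irr ?andbF // andbT andbC.
  by rewrite addNr.
rewrite -[RHS](sum_zero_sum_weight R (nbhd e i :&: W)) big_mkcond [RHS]big_mkcond.
apply: eq_bigr => j _; rewrite !inE.
have [jW|_] := boolP (j \in W); last by rewrite andbF.
have ij : i != j by apply: contraNneq iW => ->.
by rewrite mxE (negbTE ij) (negbTE iW) jW andbT.
Qed.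

Lemma mul_barbell_block_indicator_apart W W' :
  [disjoint W & W'] -> (forall i j, i \in W -> j \in W' -> ~~ e i j) ->
  barbell_block W *m indicator W' = 0.
Proof.
move=> dW noe; apply/matrixP => i k; rewrite mulmx_indicator mxE.
apply: big1 => j jW'.
have jW : j \notin W by rewrite (disjointFl dW jW').
have [iW|iW] := boolP (i \in W); last exact: barbell_block_out.
by apply: barbell_block_nonedge; [apply: contraTneq iW => -> | apply: noe].
Qed.

Definition adjacency_on S : 'M[R]_n :=
  \matrix_(i, j) [&& e i j, i \in S & j \in S]%:R.

Lemma adjacency_on_tr S : (adjacency_on S)^T = adjacency_on S.
Proof. by apply/matrixP => i j; rewrite !mxE e_sym [(j \in S) && _]andbC. Qed.

Lemma mul_adjacency_on_indicator S W :
  [disjoint S & W] -> adjacency_on S *m indicator W = 0.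
Proof.
move=> dSW; apply/matrixP => i k; rewrite mulmx_indicator mxE.
by apply: big1 => j jW; rewrite mxE (disjointFl dSW jW) !andbF.
Qed.

Definition barbell_matrix (R0 : {set 'I_n}) W1 W2 : 'M[R]_n :=
  barbell_block W1 + barbell_block W2 + adjacency_on R0.

Lemma barbell_matrixE (R0 : {set 'I_n}) W1 W2 i j :
  barbell_matrix R0 W1 W2 i j =
  barbell_block W1 i j + barbell_block W2 i j + adjacency_on R0 i j.
Proof. by rewrite [LHS]mxE [X in X + _]mxE. Qed.

Lemma barbell_matrixC (R0 : {set 'I_n}) W1 W2 :
  barbell_matrix R0 W1 W2 = barbell_matrix R0 W2 W1.
Proof. by rewrite /barbell_matrix [barbell_block W1 + _]addrC. Qed.

Lemma barbell_matrix_tr (R0 : {set 'I_n}) W1 W2 :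
  (barbell_matrix R0 W1 W2)^T = barbell_matrix R0 W1 W2.
Proof. by rewrite !linearD /= !barbell_block_tr adjacency_on_tr. Qed.

Lemma mul_barbell_matrix_indicator (R0 : {set 'I_n}) W1 W2 :
  barbell_partition e R0 W1 W2 -> barbell_matrix R0 W1 W2 *m indicator W1 = 0.
Proof.
move=> [[d01 _ d12] [_ [_ [_ [apart _]]]]].
rewrite !mulmxDl mul_barbell_block_indicator mul_adjacency_on_indicator // add0r addr0.
apply: mul_barbell_block_indicator_apart; first by rewrite disjoint_sym.
by move=> i j iW2 jW1; rewrite e_sym apart.
Qed.

Lemma barbell_matrix_edge_neq0 (R0 : {set 'I_n}) W1 W2 i j :
  barbell_partition e R0 W1 W2 -> e i j -> i \in W1 -> barbell_matrix R0 W1 W2 i j != 0.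
Proof.
move=> bp eij iW1; have lone := barbell_lone_neighbour_free e_sym bp.
case: bp => [[d01 _ d12] [_ [_ [_ [apart _]]]]].
have iW2 : i \notin W2 by rewrite (disjointFr d12 iW1).
have jW2 : j \notin W2 by apply: contraTN eij => /(apart _ _ iW1).
rewrite barbell_matrixE (barbell_block_out iW2 jW2) [adjacency_on R0 i j]mxE.
rewrite (disjointFl d01 iW1) andbF !addr0.
by apply: barbell_block_edge_neq0 => //; apply: contraTneq eij => ->; rewrite e_irr.
Qed.

Lemma barbell_matrix_pattern (R0 : {set 'I_n}) W1 W2 i j :
  barbell_partition e R0 W1 W2 -> i != j -> (barbell_matrix R0 W1 W2 i j != 0) = e i j.
Proof.
move=> bp ij; have [eij|/negbTE eij] := boolP (e i j); last first.
  by rewrite barbell_matrixE !barbell_block_nonedge ?eij // mxE eij !add0r eqxx.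
have edge_W k l : e k l -> (k \in W1) || (k \in W2) -> barbell_matrix R0 W1 W2 k l != 0.
  move=> ekl /orP[kW|kW]; first exact: barbell_matrix_edge_neq0 bp ekl kW.
  rewrite barbell_matrixC.
  exact: barbell_matrix_edge_neq0 (barbell_partitionC e_sym bp) ekl kW.
have [|/norP[iW1 iW2]] := boolP ((i \in W1) || (i \in W2)); first exact: edge_W.
have [jW|/norP[jW1 jW2]] := boolP ((j \in W1) || (j \in W2)).
  by rewrite -barbell_matrix_tr mxE edge_W // e_sym.
rewrite barbell_matrixE !barbell_block_out // mxE eij.
by rewrite !(barbell_partition_cover bp) // !add0r oner_neq0.
Qed.

Lemma barbell_matrix_cross (R0 : {set 'I_n}) W1 W2 i j :
  barbell_partition e R0 W1 W2 ->
  i \in W1 -> j \in W2 -> i != j /\ barbell_matrix R0 W1 W2 i j = 0.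
Proof.
move=> bp iW1 jW2; case: (bp) => [[_ _ d12] [_ [_ [_ [apart _]]]]].
have ij : i != j by apply: contraTneq jW2 => <-; rewrite (disjointFr d12 iW1).
split=> //; apply/eqP; rewrite -[_ == 0]negbK barbell_matrix_pattern //.
exact: apart.
Qed.

End BarbellMatrix.

Theorem lemma2p5 (R : realType) (n : nat) (e : rel 'I_n) :
  simple_graph e -> has_barbell_partition e ->
  exists M : 'M[R]_n, in_SG e M /\ ~ SAP M /\ ~ SSP M.
Proof.
move=> [e_sym e_irr] [R0 [W1 [W2 bp]]].
have bpC := barbell_partitionC e_sym bp.
pose M := barbell_matrix R e R0 W1 W2.
have M_tr : M^T = M by apply: barbell_matrix_tr.
have not_SAP : ~ SAP M.
  apply: (not_SAP_of_kernel_pair M_tr (x := indicator R W1) (y := indicator R W2)).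
  - by apply: mul_barbell_matrix_indicator.
  - by rewrite /M barbell_matrixC; apply: mul_barbell_matrix_indicator.
  - by apply: indicator_neq0; case: bp => [_ [_ []]].
  - by apply: indicator_neq0; case: bp => [_ [_ [_ []]]].
  - by move=> i j; rewrite !indicator_neq0E; apply: barbell_matrix_cross.
exists M; split; last by split=> // /(SSP_SAP M_tr).
by split=> // i j; apply: barbell_matrix_pattern.
Qed.
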